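(* Let $n\ge0$, let $\chi$ be a primitive Dirichlet character of conductor $q$ with $\gcd(q,N)=1$, let $\phi$ be a test function as in the context, and let $x>10^6$. Then $$\Big|\sum_{j\ge1}\Lambda_{\mathrm{Sym}^nf\otimes\chi}(j)\phi_x(j)-\sum_{p\nmid N}U_n(\cos\theta_p)\log(p)\chi(p)\phi_x(p)\Big|\le 9.06(n+1)\sqrt{x}+2(n+1)\log N,$$ where the second sum is over primes $p$.
   Context: $f\in S_k^{\mathrm{new}}(\Gamma_0(N))$ is a newform of even weight $k$ and squarefree level $N$. For each prime $p\nmid N$, $\theta_p\in[0,\pi]$ is defined by $a_f(p)=2p^{(k-1)/2}\cos\theta_p$. $U_n$ is the Chebyshev polynomial of the second kind: $U_n(\cos\theta)=\sin((n+1)\theta)/\sin\theta$. Twisted symmetric power $L$-function (for $\mathrm{Re}(s)>1$): $$L(s,\mathrm{Sym}^n f\otimes\chi)=\prod_{p\mid N}\big(1-(-\lambda_p p^{-1/2})^n\chi(p)p^{-s}\big)^{-1}\prod_{p\nmid N}\prod_{j=0}^{n}\big(1-e^{i(2j-n)\theta_p}\chi(p)p^{-s}\big)^{-1},$$ where $\lambda_p\in\{\pm1\}$ is the eigenvalue of the Atkin–Lehner operator $W(p)$ on $f$. The numbers $\Lambda_{\mathrm{Sym}^nf\otimes\chi}(j)$ are defined by $-\frac{L'}{L}(s,\mathrm{Sym}^nf\otimes\chi)=\sum_{j\ge1}\Lambda_{\mathrm{Sym}^nf\otimes\chi}(j)j^{-s}$ for $\mathrm{Re}(s)>1$. Test function: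 $\phi:\mathbb R\to\mathbb R$ is infinitely differentiable, $0\le\phi(t)\le 2$, with support contained in $[1/2,5/2]$; $\phi_x(t)=\phi(t/x)$. *)

From Stdlib Require Import Reals Lra Lia Arith ZArith Znumtheory List.
Open Scope R_scope.

Definition CC := (R * R)%type.
Definition C0 : CC := (0, 0).
Definition C1 : CC := (1, 0).
Definition Cadd (z w : CC) : CC := (fst z + fst w, snd z + snd w).
Definition Csub (z w : CC) : CC := (fst z - fst w, snd z - snd w).
Definition Cmul (z w : CC) : CC :=
  (fst z * fst w - snd z * snd w, fst z * snd w + snd z * fst w).
Definition Cscale (r : R) (z : CC) : CC := (r * fst z, r * snd z).
Fixpoint Cpow (z : CC) (m : nat) : CC :=
  match m with O => C1 | S m' => Cmul z (Cpow z m') end.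
Definition Cexpi (t : R) : CC := (cos t, sin t).
Definition Cnorm (z : CC) : R := sqrt (fst z ^ 2 + snd z ^ 2).
(** Csum a b f = f a + f (a+1) + ... + f b  (empty if b < a) *)
Definition Csum (a b : nat) (f : nat -> CC) : CC :=
  fold_right (fun j acc => Cadd (f j) acc) C0 (seq a (S b - a)).

Definition nprime (p : nat) : Prop := prime (Z.of_nat p).

Definition squarefree (N : nat) : Prop :=
  forall p, nprime p -> ~ Nat.divide (p * p) N.

Definition dirichlet_char (q : nat) (chi : nat -> CC) : Prop :=
  (1 <= q)%nat /\
  chi 1%nat = C1 /\
  (forall a b, chi (a * b)%nat = Cmul (chi a) (chi b)) /\
  (forall a, chi (a + q)%nat = chi a) /\
  (forall a, chi a = C0 <-> Nat.gcd a q <> 1%nat).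

(** Primitive of conductor q: not induced from any modulus d | q, d < q,
    i.e. for each such d, chi is nontrivial on {a : gcd(a,q)=1, a = 1 mod d}. *)
Definition primitive_char (q : nat) (chi : nat -> CC) : Prop :=
  dirichlet_char q chi /\
  forall d, Nat.divide d q -> (d < q)%nat ->
    exists a, Nat.gcd a q = 1%nat /\ Nat.modulo a d = Nat.modulo 1 d /\ chi a <> C1.

(** Chebyshev polynomials of the second kind: U_0 = 1, U_1 = 2t,
    U_{n+1} = 2t U_n - U_{n-1}.  chebU_aux n t = (U_n t, U_{n+1} t). *)
Fixpoint chebU_aux (n : nat) (t : R) : R * R :=
  match n with
  | O => (1, 2 * t)
  | S n' => let (a, b) := chebU_aux n' t in (b, 2 * t * b - a)
  end.
Definition chebU (n : nat) (t : R) : R := fst (chebU_aux n t).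

Definition smooth (phi : R -> R) : Prop :=
  exists D : nat -> R -> R, D 0%nat = phi /\
    forall k t, derivable_pt_lim (D k) t (D (S k) t).

Definition test_fun (phi : R -> R) : Prop :=
  smooth phi /\ (forall t, 0 <= phi t <= 2) /\
  (forall t, phi t <> 0 -> 1/2 <= t <= 5/2).

(** Euler-product local roots: for p | N the single root
    (-lam_p p^{-1/2})^n chi(p); for p not dividing N the roots
    e^{i(2i-n)theta_p} chi(p), i = 0..n.
    -L'/L = sum_p sum_{m>=1} log p (sum of m-th powers of roots) p^{-ms},
    so Lambda(p^m) = log p * (sum of roots^m), Lambda(j) = 0 otherwise. *)
Definition LambdaSym (N n : nat) (theta lam : nat -> R) (chi : nat -> CC)
  (j : nat) : CC :=
  Csum 2 j (fun p => Csum 1 j (fun m =>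
    if prime_dec (Z.of_nat p) then
      if Nat.eqb j (p ^ m)%nat then
        Cscale (ln (INR p))
          (if Nat.eqb (Nat.modulo N p) 0%nat
           then Cpow (Cscale ((- lam p / sqrt (INR p)) ^ n) (chi p)) m
           else Csum 0 n (fun i =>
                  Cpow (Cmul (Cexpi ((2 * INR i - INR n) * theta p)) (chi p)) m))
      else C0
    else C0)).

(* Expanding -L'/L over prime powers, the coefficient at a prime p not dividing N is
   log p chi(p) (e^{-in theta_p} + e^{i(2-n) theta_p} + ... + e^{in theta_p})
   = log p chi(p) U_n(cos theta_p), so these terms cancel exactly against the second sum.
   Every local root has modulus at most 1 and |chi| <= 1, hence |Lambda(p^m)| <= (n+1) log p.
   What is left are the primes p | N, contributing at most 2 sum_{p | N} log p <= 2 log N,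
   and the prime powers p^m, m >= 2, in the support [x/2, 5x/2] of phi_x: since that interval
   has ratio 5, each p with p^2 <= 5x/2 has at most two such powers (three for p = 2), giving
   2 (n+1) (2 theta(sqrt(5x/2)) + log 2). Chebyshev's bound theta(y) <= y log 4, which comes from
   prod_{m+1 < p <= 2m+1} p | C(2m+1, m) <= 4^m, and log 2 <= 0.71 yield the constant 9.06. *)

From Pilot Require Import Defs.
From Stdlib Require Import Reals Arith ZArith Znumtheory List Lia Lra.
From Coquelicot Require Complex Rcomplements.
From mathcomp Require all_boot zify.

Definition primeb (p : nat) : bool := if prime_dec (Z.of_nat p) then true else false.

Fixpoint prod_upto (c : nat -> bool) (K : nat) : nat :=
  match K with
  | O => 1
  | S K' => prod_upto c K' * (if c K then K else 1)
  end%nat.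

(** * Chebyshev's bound for the primorial *)

Module Primorial.
Import all_boot zify.
Local Open Scope nat_scope.

Lemma binomial_mid_le m : 'C(m.*2.+1, m) <= 4 ^ m.
Proof.
set n := m.*2.+1.
have row_sum : \sum_(0 <= i < n.+1) 'C(n, i) = 2 ^ n.
  rewrite -[2]add1n expnDn big_mkord; apply: eq_bigr => i _.
  by rewrite !exp1n !muln1.
have sym : 'C(n, m.+1) = 'C(n, m) by rewrite -bin_sub /n; [congr 'C(_, _)|]; lia.
have : 'C(n, m) + 'C(n, m.+1) <= 2 ^ n.
  rewrite -row_sum (big_cat_nat _ (n := m)) //=; last lia.
  by rewrite (big_ltn (m := m)) ?(big_ltn (m := m.+1)) /n; lia.
by rewrite sym /n expnS -mul2n expnM -[2 ^ 2]/4; lia.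
Qed.

Lemma prime_dvd_fact_le p k : prime p -> p %| k`! -> p <= k.
Proof.
move=> p_prime; elim: k => [|k IH]; first by rewrite dvdn1 => /eqP p1; rewrite p1 in p_prime.
rewrite factS Euclid_dvdM // => /orP [/dvdn_leq -> //|/IH]; lia.
Qed.

Lemma prod_primes_dvd (P : pred nat) a b c : 0 < c ->
  (forall p, a <= p < b -> prime p -> P p -> p %| c) ->
  \prod_(a <= p < b | prime p && P p) p %| c.
Proof.
move=> c_gt0; elim: b => [|b IH] dvd_c; first by rewrite big_geq.
have [ab|] := leqP a b; last by move=> ba; rewrite big_geq.
rewrite big_mkcond big_nat_recr //= -big_mkcond.
have IH' := IH (fun p hp => dvd_c p ltac:(lia)).
case: ifP => [/andP [b_prime Pb]|_]; last by rewrite muln1.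
rewrite Gauss_dvd; first by rewrite IH' dvd_c //; lia.
rewrite coprime_sym big_nat_cond.
apply: (big_ind (coprime b)) => [|y z|i /andP [/andP [_ ib] /andP [i_prime _]]].
- exact: coprimen1.
- by rewrite coprimeMr => -> ->.
- by rewrite prime_coprime // dvdn_prime2 // neq_ltn ib orbT.
Qed.

Lemma prime_dvd_binomial_mid m p : prime p -> m.+1 < p <= m.*2.+1 -> p %| 'C(m.*2.+1, m).
Proof.
move=> p_prime p_range.
have := bin_fact (n := m.*2.+1) (m := m) ltac:(lia).
have -> : m.*2.+1 - m = m.+1 by lia.
move=> fact_eq.
have : p %| (m.*2.+1)`! by apply: dvdn_fact; lia.
rewrite -fact_eq Euclid_dvdM // Euclid_dvdM // => /orP [//|/orP [|]] /(prime_dvd_fact_le _ _ p_prime); lia.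
Qed.

Lemma primes_mid_prod_le m : \prod_(m.+2 <= p < m.*2.+2 | prime p) p <= 4 ^ m.
Proof.
apply: leq_trans (binomial_mid_le m).
apply: dvdn_leq; first by rewrite bin_gt0; lia.
rewrite (eq_bigl (fun p => prime p && predT p)) => [|p]; last by rewrite andbT.
apply: prod_primes_dvd => [|p p_range p_prime _]; first by rewrite bin_gt0; lia.
apply: prime_dvd_binomial_mid => //; lia.
Qed.

Lemma primorial_le n : \prod_(0 <= p < n.+1 | prime p) p <= 4 ^ n.
Proof.
elim/ltn_ind: n => n IH.
have [|n_gt2] := leqP n 2; first by case: n {IH} => [|[|[|]]] //; rewrite unlock.
case/boolP: (odd n) => [n_odd|n_even].
- have n_eq : n = n./2.*2.+1 by rewrite -[n in LHS]odd_double_half n_odd.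
  move: n_eq n_gt2 IH; set m := n./2 => -> m_gt0 IH.
  rewrite (big_cat_nat _ (n := m.+2)) //=; last lia.
  apply: leq_trans (leq_mul (IH m.+1 _) (primes_mid_prod_le m)) _; first lia.
  by rewrite -expnD addSn addnn.
- move: n n_gt2 IH n_even => [//|k] k_gt1 IH k_even.
  rewrite big_mkcond big_nat_recr //= -big_mkcond.
  have not_prime : ~~ prime k.+1.
    by apply/negP => /even_prime [|k_odd]; [lia|rewrite k_odd in k_even].
  rewrite (negbTE not_prime) muln1.
  by apply: leq_trans (IH k _) _; rewrite ?leq_exp2l.
Qed.
Lemma primeb_prime p : primeb p = prime p.
Proof.
rewrite /primeb; case: prime_dec => [Zp|not_Zp]; apply/esym.
- apply/primeP; split=> [|d /dvdnP [k p_eq]]; first by have := prime_ge_2 _ Zp; lia.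
  have Zd : (Z.of_nat d | Z.of_nat p)%Z by exists (Z.of_nat k); lia.
  by case: (prime_divisors _ Zp _ Zd); lia.
- apply/negP => /primeP [p_gt1 p_divs]; apply: not_Zp; apply/prime_alt; split=> [|d d_range [k p_eq]].
    lia.
  have /p_divs : Z.to_nat d %| p by apply/dvdnP; exists (Z.to_nat k); nia.
  by case/orP => /eqP; lia.
Qed.

Lemma prime_dvdn_mod p N : prime p -> (p %| N) = (Nat.modulo N p =? 0)%coq_nat.
Proof.
move=> /prime_gt0 p_gt0; apply/idP/idP => [/dvdnP [k ->]|/PeanoNat.Nat.eqb_eq].
  by apply/PeanoNat.Nat.eqb_eq; rewrite PeanoNat.Nat.Div0.mod_mul.
by move/PeanoNat.Nat.Lcm0.mod_divide => [k N_eq]; apply/dvdnP; exists k.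
Qed.

Lemma prod_upto_big c K : c 0 = false -> prod_upto c K = \prod_(0 <= p < K.+1 | c p) p.
Proof.
move=> c0; elim: K => [|K IH] /=; first by rewrite big_mkcond big_nat1 c0.
by rewrite IH [RHS]big_mkcond big_nat_recr //= -big_mkcond.
Qed.

Lemma expn_pow m k : m ^ k = Nat.pow m k.
Proof. by elim: k => [|k IH] //=; rewrite expnS IH. Qed.

Lemma prod_upto_primes_le K : (prod_upto primeb K <= Nat.pow 4 K)%coq_nat.
Proof.
apply/leP; rewrite -expn_pow prod_upto_big ?primeb_prime //.
by rewrite (eq_bigl _ _ primeb_prime) primorial_le.
Qed.

Lemma prod_upto_prime_divisors_le N K : (0 < N)%coq_nat ->
  (prod_upto (fun p => primeb p && (Nat.modulo N p =? 0)%coq_nat) K <= N)%coq_nat.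
Proof.
move=> /ltP N_gt0; apply/leP; rewrite prod_upto_big ?primeb_prime //.
rewrite (eq_bigl (fun p => prime p && (p %| N))) => [|p]; last first.
  by rewrite primeb_prime; case/boolP: (prime p) => // /prime_dvdn_mod ->.
apply: dvdn_leq => //; exact: prod_primes_dvd.
Qed.
End Primorial.

Open Scope R_scope.
Set Bullet Behavior "Strict Subproofs".

(** * Finite sums and complex numbers *)

Definition Rlsum (l : list nat) (f : nat -> R) : R :=
  fold_right (fun j acc => f j + acc) 0 l.

Definition Rsum (a b : nat) (f : nat -> R) : R := Rlsum (seq a (S b - a)) f.

Lemma Rlsum_app l1 l2 f : Rlsum (l1 ++ l2) f = Rlsum l1 f + Rlsum l2 f.
Proof. induction l1 as [|a l1 IH]; simpl; [|rewrite IH]; lra. Qed.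

Lemma Rlsum_ext l f g : (forall j, In j l -> f j = g j) -> Rlsum l f = Rlsum l g.
Proof.
induction l as [|a l IH]; simpl; intros fg; [reflexivity|].
rewrite fg, IH; auto.
Qed.

Lemma Rlsum_le l f g : (forall j, In j l -> f j <= g j) -> Rlsum l f <= Rlsum l g.
Proof.
induction l as [|a l IH]; simpl; intros fg; [lra|].
apply Rplus_le_compat; auto.
Qed.

Lemma Rlsum_const l c : Rlsum l (fun _ => c) = INR (length l) * c.
Proof. induction l as [|a l IH]; simpl Rlsum; [simpl; lra|rewrite IH, length_cons, S_INR; lra]. Qed.

Lemma Rlsum_nonneg l f : (forall j, In j l -> 0 <= f j) -> 0 <= Rlsum l f.
Proof. intros f_ge0; rewrite <- (Rmult_0_r (INR (length l))), <- Rlsum_const; now apply Rlsum_le. Qed.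

Lemma Rlsum_plus l f g : Rlsum l (fun j => f j + g j) = Rlsum l f + Rlsum l g.
Proof. induction l as [|a l IH]; simpl; [|rewrite IH]; lra. Qed.

Lemma Rlsum_scal l c f : Rlsum l (fun j => c * f j) = c * Rlsum l f.
Proof. induction l as [|a l IH]; simpl; [|rewrite IH]; lra. Qed.

Lemma Rlsum_exchange l1 l2 (F : nat -> nat -> R) :
  Rlsum l1 (fun j => Rlsum l2 (F j)) = Rlsum l2 (fun p => Rlsum l1 (fun j => F j p)).
Proof.
induction l1 as [|a l1 IH]; simpl.
- rewrite Rlsum_const; ring.
- now rewrite IH, <- Rlsum_plus.
Qed.

Lemma Rlsum_term_le l f k : In k l -> (forall j, In j l -> 0 <= f j) -> f k <= Rlsum l f.
Proof.
induction l as [|a l IH]; simpl; intros k_in f_ge0; [contradiction|].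
assert (0 <= f a) by auto.
assert (0 <= Rlsum l f) by (apply Rlsum_nonneg; auto).
destruct k_in as [<-|k_in]; [lra|].
specialize (IH k_in (fun j j_in => f_ge0 j (or_intror j_in))); lra.
Qed.

Lemma Rlsum_indicator_le l k v : NoDup l -> 0 <= v ->
  Rlsum l (fun j => if (j =? k)%nat then v else 0) <= v.
Proof.
induction l as [|a l IH]; simpl; intros l_nodup v_ge0; [lra|].
inversion l_nodup as [|? ? a_notin l_nodup']; subst.
destruct (Nat.eqb_spec a k) as [<-|_]; [|specialize (IH l_nodup' v_ge0); lra].
rewrite (Rlsum_ext _ _ (fun _ => 0)), Rlsum_const; [lra|].
intros j j_in; destruct (Nat.eqb_spec j a); [subst; contradiction|reflexivity].
Qed.

Lemma Rlsum_seq_telescope g s a k :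
  Rlsum (seq a k) (fun m => g m - g (m + s)%nat) = Rlsum (seq a s) g - Rlsum (seq (a + k) s) g.
Proof.
revert a; induction k as [|k IH]; intros a; simpl.
- rewrite Nat.add_0_r; lra.
- rewrite IH.
  assert (split_first : Rlsum (seq a (s + 1)) g = g a + Rlsum (seq (S a) s) g).
  { now rewrite Nat.add_1_r. }
  rewrite seq_app, Rlsum_app in split_first; simpl in split_first.
  rewrite Nat.add_succ_r, <- Nat.add_succ_l; lra.
Qed.

Lemma Rsum_cons a b f : (a <= b)%nat -> Rsum a b f = f a + Rsum (S a) b f.
Proof. intros ab; unfold Rsum; now replace (S b - a)%nat with (S (S b - S a)) by lia. Qed.

Lemma Rsum_snoc a b f : (a <= S b)%nat -> Rsum a (S b) f = Rsum a b f + f (S b).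
Proof.
intros ab; unfold Rsum.
replace (S (S b) - a)%nat with ((S b - a) + 1)%nat by lia.
rewrite seq_app, Rlsum_app; replace (a + (S b - a))%nat with (S b) by lia; simpl; lra.
Qed.

Lemma Rsum_extend a b c f : (a <= S b)%nat -> (b <= c)%nat ->
  (forall i, (b < i <= c)%nat -> f i = 0) -> Rsum a b f = Rsum a c f.
Proof.
intros ab bc f_zero; unfold Rsum.
replace (S c - a)%nat with ((S b - a) + (c - b))%nat by lia.
rewrite seq_app, Rlsum_app, (Rlsum_ext (seq _ (c - b)) f (fun _ => 0)), Rlsum_const; [lra|].
intros i i_in; apply in_seq in i_in; apply f_zero; lia.
Qed.

Definition Clsum (l : list nat) (f : nat -> CC) : CC :=
  fold_right (fun j acc => Cadd (f j) acc) C0 l.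

Lemma Csum_Clsum a b f : Csum a b f = Clsum (seq a (S b - a)) f.
Proof. reflexivity. Qed.

Ltac CC_ring :=
  apply injective_projections; unfold Cadd, Csub, Cmul, Cscale, C0, Defs.C1; cbn [fst snd]; ring.

Lemma Clsum_ext l f g : (forall j, In j l -> f j = g j) -> Clsum l f = Clsum l g.
Proof.
induction l as [|a l IH]; simpl; intros fg; [reflexivity|].
rewrite fg, IH; auto.
Qed.

Lemma Clsum_app l1 l2 f : Clsum (l1 ++ l2) f = Cadd (Clsum l1 f) (Clsum l2 f).
Proof. induction l1 as [|a l1 IH]; simpl; [|rewrite IH]; CC_ring. Qed.

Lemma Clsum_add l f g : Clsum l (fun j => Cadd (f j) (g j)) = Cadd (Clsum l f) (Clsum l g).
Proof. induction l as [|a l IH]; simpl; [|rewrite IH]; CC_ring. Qed.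

Lemma Clsum_sub l f g : Clsum l (fun j => Csub (f j) (g j)) = Csub (Clsum l f) (Clsum l g).
Proof. induction l as [|a l IH]; simpl; [|rewrite IH]; CC_ring. Qed.

Lemma Clsum_mulr l f z : Clsum l (fun j => Cmul (f j) z) = Cmul (Clsum l f) z.
Proof. induction l as [|a l IH]; simpl; [|rewrite IH]; CC_ring. Qed.

Lemma Clsum_zero l f : (forall j, In j l -> f j = C0) -> Clsum l f = C0.
Proof.
induction l as [|a l IH]; simpl; intros f_zero; [reflexivity|].
rewrite f_zero, IH by auto; CC_ring.
Qed.

Lemma Clsum_single l f k : NoDup l -> (forall p, p <> k -> f p = C0) ->
  (In k l \/ f k = C0) -> Clsum l f = f k.
Proof.
induction l as [|a l IH]; simpl; intros l_nodup f_zero k_cases.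
- destruct k_cases as [[]|fk]; now rewrite fk.
- inversion l_nodup as [|? ? a_notin l_nodup']; subst.
  destruct (Nat.eq_dec a k) as [<-|ak].
  + rewrite Clsum_zero; [CC_ring|].
    intros j j_in; apply f_zero; intros <-; contradiction.
  + rewrite f_zero, IH by (auto; tauto); CC_ring.
Qed.

Lemma Cnorm_add z w : Cnorm (Cadd z w) <= Cnorm z + Cnorm w.
Proof. exact (Complex.Cmod_triangle z w). Qed.

Lemma Cnorm_mul z w : Cnorm (Cmul z w) = Cnorm z * Cnorm w.
Proof. exact (Complex.Cmod_mult z w). Qed.

Lemma Cnorm_ge0 z : 0 <= Cnorm z.
Proof. apply sqrt_pos. Qed.

Lemma Cnorm_C0 : Cnorm C0 = 0.
Proof. exact Complex.Cmod_0. Qed.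

Lemma Cnorm_C1 : Cnorm Defs.C1 = 1.
Proof. exact Complex.Cmod_1. Qed.

Lemma Cnorm_scale r z : Cnorm (Cscale r z) = Rabs r * Cnorm z.
Proof.
replace (Cscale r z) with (Cmul (r, 0) z) by CC_ring.
now rewrite Cnorm_mul, <- (Complex.Cmod_R r).
Qed.

Lemma Cnorm_sub z w : Cnorm (Csub z w) <= Cnorm z + Cnorm w.
Proof.
replace (Csub z w) with (Cadd z (Cscale (-1) w)) by CC_ring.
rewrite <- (Rmult_1_l (Cnorm w)), <- Rabs_R1, <- Rabs_Ropp, <- Cnorm_scale; apply Cnorm_add.
Qed.

Lemma Cnorm_Cexpi t : Cnorm (Cexpi t) = 1.
Proof.
unfold Cnorm, Cexpi; cbn [fst snd].
rewrite <- sqrt_1; f_equal; pose proof (sin2_cos2 t); unfold Rsqr in *; nra.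
Qed.

Lemma Cnorm_Cpow z m : Cnorm (Cpow z m) = Cnorm z ^ m.
Proof. induction m as [|m IH]; simpl; [apply Cnorm_C1|now rewrite Cnorm_mul, IH]. Qed.

Lemma Cpow_1 z : Cpow z 1 = z.
Proof. simpl; CC_ring. Qed.

Lemma Cnorm_Clsum_le l f : Cnorm (Clsum l f) <= Rlsum l (fun j => Cnorm (f j)).
Proof.
induction l as [|a l IH]; simpl; [rewrite Cnorm_C0; lra|].
eapply Rle_trans; [apply Cnorm_add|lra].
Qed.

(** * Local roots and Dirichlet characters *)

Lemma chebU_SS n t : chebU (S (S n)) t = 2 * t * chebU (S n) t - chebU n t.
Proof. unfold chebU; simpl; now destruct (chebU_aux n t). Qed.

Lemma chebU_cos th n :
  sin th * chebU n (cos th) = sin (INR (S n) * th) /\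
  chebU (S n) (cos th) = cos th * chebU n (cos th) + cos (INR (S n) * th).
Proof.
induction n as [|n [sin_eq cos_eq]].
- cbn [chebU chebU_aux fst]; rewrite Rmult_1_l; split; ring.
- replace (INR (S (S n)) * th) with (INR (S n) * th + th) by (rewrite (S_INR (S n)); ring).
  rewrite sin_plus, cos_plus, <- sin_eq, chebU_SS, cos_eq.
  pose proof (sin2_cos2 th) as pythagoras; unfold Rsqr in pythagoras.
  assert (U_eq : chebU n (cos th) = (sin th * sin th + cos th * cos th) * chebU n (cos th))
    by (rewrite pythagoras; ring).
  split; [ring|lra].
Qed.

Lemma Cexpi_plus a b : Cexpi (a + b) = Cmul (Cexpi a) (Cexpi b).
Proof. unfold Cexpi; rewrite cos_plus, sin_plus; CC_ring. Qed.

(* Peel off the last root: S_{n+1} = e^{-i th} S_n + e^{i(n+1) th}. *)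
Lemma Csum_Cexpi_chebU th n :
  Csum 0 n (fun i => Cexpi ((2 * INR i - INR n) * th)) = (chebU n (cos th), 0).
Proof.
induction n as [|n IH].
- cbn; replace ((2 * 0 - 0) * th) with 0 by ring.
  unfold Cexpi; rewrite cos_0, sin_0; CC_ring.
- rewrite Csum_Clsum in *.
  replace (S (S n) - 0)%nat with (S n - 0 + 1)%nat by lia.
  rewrite seq_app, Clsum_app.
  rewrite (Clsum_ext _ _ (fun i => Cmul (Cexpi ((2 * INR i - INR n) * th)) (Cexpi (- th)))).
  + rewrite Clsum_mulr, IH; cbn [Clsum fold_right seq Nat.add Nat.sub].
    destruct (chebU_cos th n) as [sin_eq cos_eq].
    replace ((2 * INR (S n) - INR (S n)) * th) with (INR (S n) * th) by ring.
    unfold Cexpi; rewrite cos_neg, sin_neg, cos_eq, <- sin_eq; CC_ring.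
  + intros i _; rewrite <- Cexpi_plus, S_INR; f_equal; ring.
Qed.

(* A periodic function is bounded, and |chi a|^k = |chi (a^k)| stays bounded only if |chi a| <= 1. *)
Lemma dirichlet_char_norm_le q chi : dirichlet_char q chi -> forall a, Cnorm (chi a) <= 1.
Proof.
intros [q_pos [chi_1 [chi_mul [chi_period _]]]] a.
set (B := Rlsum (seq 0 q) (fun r => Cnorm (chi r))).
assert (chi_bounded : forall b, Cnorm (chi b) <= B).
{ intros b.
  assert (reduce : forall r k, chi (r + k * q)%nat = chi r).
  { intros r k; induction k as [|k IH]; [f_equal; lia|].
    now replace (r + S k * q)%nat with (r + k * q + q)%nat by lia; rewrite chi_period. }
  rewrite (Nat.div_mod_eq b q), Nat.add_comm, Nat.mul_comm, reduce.
  apply (Rlsum_term_le _ (fun r => Cnorm (chi r))); [|intros; apply Cnorm_ge0].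
  apply in_seq; pose proof (Nat.mod_upper_bound b q); lia. }
assert (chi_pow : forall k, Cnorm (chi (a ^ k)%nat) = Cnorm (chi a) ^ k).
{ induction k as [|k IH]; simpl; [now rewrite chi_1, Cnorm_C1|now rewrite chi_mul, Cnorm_mul, IH]. }
destruct (Rle_or_lt (Cnorm (chi a)) 1) as [le1|gt1]; [exact le1|exfalso].
destruct (Pow_x_infinity (Cnorm (chi a))) with (b := B + 1) as [K HK].
{ rewrite Rabs_right; [lra|apply Rle_ge, Cnorm_ge0]. }
specialize (HK K (le_n K)); rewrite <- chi_pow, Rabs_right in HK by apply Rle_ge, Cnorm_ge0.
specialize (chi_bounded (a ^ K)%nat); lra.
Qed.

(** * Sums of logarithms of primes *)

Lemma if_primeb {A : Type} p (a b : A) :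
  (if primeb p then a else b) = if prime_dec (Z.of_nat p) then a else b.
Proof. unfold primeb; now destruct prime_dec. Qed.

Lemma prime_ge2 p : prime (Z.of_nat p) -> (2 <= p)%nat.
Proof. intros p_prime; apply prime_ge_2 in p_prime; lia. Qed.

Lemma ln_INR_ge0 p : (1 <= p)%nat -> 0 <= ln (INR p).
Proof. intros p_ge1; rewrite <- ln_1; apply Rcomplements.ln_le; [lra|apply (le_INR 1), p_ge1]. Qed.

Lemma prod_upto_pos c K : (0 < prod_upto c K)%nat.
Proof. induction K as [|K IH]; simpl; [lia|destruct (c (S K)); lia]. Qed.

Lemma Rsum_ln_prod_upto (c : nat -> bool) K :
  Rsum 1 K (fun j => if c j then ln (INR j) else 0) = ln (INR (prod_upto c K)).
Proof.
induction K as [|K IH]; [unfold Rsum; simpl; now rewrite ln_1|].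
rewrite Rsum_snoc, IH by lia; cbn [prod_upto].
pose proof (prod_upto_pos c K).
rewrite mult_INR, ln_mult by (try destruct (c (S K)); apply lt_0_INR; lia).
destruct (c (S K)); [reflexivity|simpl; rewrite ln_1; ring].
Qed.

Lemma sum_ln_primes_le K : Rsum 1 K (fun p => if primeb p then ln (INR p) else 0) <= INR K * ln 4.
Proof.
rewrite Rsum_ln_prod_upto, <- ln_pow by lra.
apply Rcomplements.ln_le; [apply lt_0_INR, prod_upto_pos|].
replace 4 with (INR 4) by (simpl; ring).
rewrite <- pow_INR; apply le_INR, Primorial.prod_upto_primes_le.
Qed.

Lemma sum_ln_prime_divisors_le N M : (1 <= N)%nat ->
  Rsum 1 M (fun p => if (primeb p && (N mod p =? 0)%nat)%bool then ln (INR p) else 0) <= ln (INR N).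
Proof.
intros N_pos; rewrite Rsum_ln_prod_upto.
apply Rcomplements.ln_le; [apply lt_0_INR, prod_upto_pos|].
apply le_INR, Primorial.prod_upto_prime_divisors_le; lia.
Qed.

(** * Prime powers in the support of phi_x *)

Definition below (Y t : R) : R := if Rle_dec t Y then 1 else 0.

Definition window (x t : R) : R := if Rle_dec (x / 2) t then below (5/2 * x) t else 0.

Lemma below_01 Y t : 0 <= below Y t <= 1.
Proof. unfold below; destruct Rle_dec; lra. Qed.

Lemma window_01 x t : 0 <= window x t <= 1.
Proof. unfold window; destruct Rle_dec; [apply below_01|lra]. Qed.

(* When r^s > 5, at most one of r^m and r^(m+s) lies in [x/2, 5x/2]. *)
Lemma window_pow_le_below_diff x r s m : 0 < r -> 5 < r ^ s ->
  window x (r ^ m) <= below (5/2 * x) (r ^ m) - below (5/2 * x) (r ^ (m + s)).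
Proof.
intros r_pos rs_gt5.
assert (pow_mS : r ^ (m + s) = r ^ m * r ^ s) by apply pow_add.
assert (0 < r ^ m) by (apply pow_lt, r_pos).
unfold window, below.
destruct (Rle_dec (x / 2) (r ^ m)), (Rle_dec (r ^ m) (5/2 * x)), (Rle_dec (r ^ (m + s)) (5/2 * x));
  nra.
Qed.

Lemma sum_window_powers_le x r s M : 1 <= r -> 5 < r ^ s ->
  Rsum 2 M (fun m => window x (r ^ m)) <= INR s * below (5/2 * x) (r ^ 2).
Proof.
intros r_ge1 rs_gt5.
set (g m := below (5/2 * x) (r ^ m)).
assert (g_le_g2 : forall m, (2 <= m)%nat -> g m <= g 2%nat).
{ intros m m_ge2; unfold g, below.
  pose proof (Rle_pow r 2 m r_ge1 m_ge2).
  destruct (Rle_dec (r ^ m)), (Rle_dec (r ^ 2)); lra. }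
apply Rle_trans with (Rsum 2 M (fun m => g m - g (m + s)%nat)).
{ apply Rlsum_le; intros m _; apply window_pow_le_below_diff; lra. }
unfold Rsum; rewrite Rlsum_seq_telescope.
assert (0 <= Rlsum (seq (2 + (S M - 2)) s) g) by (apply Rlsum_nonneg; intros; apply below_01).
assert (Rlsum (seq 2 s) g <= INR s * g 2%nat).
{ rewrite <- (length_seq s 2) at 2; rewrite <- Rlsum_const.
  apply Rlsum_le; intros m m_in; apply in_seq in m_in; apply g_le_g2; lia. }
unfold g in *; lra.
Qed.

Lemma sum_window_prime_powers_le x p M : (2 <= p)%nat ->
  Rsum 2 M (fun m => window x (INR p ^ m))
  <= 2 * below (5/2 * x) (INR p ^ 2) + (if (p =? 2)%nat then 1 else 0).
Proof.
intros p_ge2; destruct (Nat.eqb_spec p 2) as [->|p_ne2].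
- replace (INR 2) with 2 by (simpl; ring).
  pose proof (below_01 (5/2 * x) (2 ^ 2)).
  apply Rle_trans with (INR 3 * below (5/2 * x) (2 ^ 2)); [apply sum_window_powers_le; simpl; lra|].
  replace (INR 3) with 3 by (simpl; ring); lra.
- assert (3 <= INR p) by (replace 3 with (INR 3) by (simpl; ring); apply le_INR; lia).
  pose proof (below_01 (5/2 * x) (INR p ^ 2)).
  apply Rle_trans with (INR 2 * below (5/2 * x) (INR p ^ 2)); [apply sum_window_powers_le; simpl; nra|].
  replace (INR 2) with 2 by (simpl; ring); lra.
Qed.

Definition prime_power_log (j p m : nat) : R :=
  if prime_dec (Z.of_nat p) then if (j =? p ^ m)%nat then ln (INR p) else 0 else 0.

Lemma prime_power_log_ge0 j p m : 0 <= prime_power_log j p m.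
Proof.
unfold prime_power_log; destruct prime_dec as [p_prime|]; [|lra].
destruct (j =? p ^ m)%nat; [|lra].
apply ln_INR_ge0; apply prime_ge2 in p_prime; lia.
Qed.

Lemma Rsum_prime_power_log_extend j M : (1 <= j <= M)%nat ->
  Rsum 2 j (fun p => Rsum 2 j (prime_power_log j p))
  = Rsum 2 M (fun p => Rsum 2 M (prime_power_log j p)).
Proof.
intros j_range.
assert (vanish : forall p m, (j < p ^ m)%nat -> prime_power_log j p m = 0).
{ intros p m j_lt; unfold prime_power_log; destruct prime_dec; [|reflexivity].
  destruct (Nat.eqb_spec j (p ^ m)); [lia|reflexivity]. }
transitivity (Rsum 2 j (fun p => Rsum 2 M (prime_power_log j p))).
- apply Rlsum_ext; intros p p_in; apply in_seq in p_in.
  apply Rsum_extend; try lia.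
  intros m m_range; apply vanish.
  pose proof (Nat.pow_gt_lin_r p m ltac:(lia)); lia.
- apply Rsum_extend; try lia.
  intros p p_range; unfold Rsum; rewrite (Rlsum_ext _ _ (fun _ => 0)), Rlsum_const; [ring|].
  intros m m_in; apply in_seq in m_in; apply vanish.
  pose proof (Nat.pow_le_mono_r p 1 m ltac:(lia) ltac:(lia)); rewrite Nat.pow_1_r in *; lia.
Qed.

Lemma sum_window_prime_power_log_le x M p m :
  Rsum 1 M (fun j => window x (INR j) * prime_power_log j p m)
  <= if prime_dec (Z.of_nat p) then window x (INR p ^ m) * ln (INR p) else 0.
Proof.
unfold Rsum, prime_power_log; destruct prime_dec as [p_prime|].
- rewrite (Rlsum_ext _ _ (fun j => if (j =? p ^ m)%nat then window x (INR p ^ m) * ln (INR p) else 0)).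
  + apply Rlsum_indicator_le; [apply seq_NoDup|].
    pose proof (window_01 x (INR p ^ m)).
    apply Rmult_le_pos; [lra|apply ln_INR_ge0; apply prime_ge2 in p_prime; lia].
  + intros j _; destruct (Nat.eqb_spec j (p ^ m)) as [->|_]; [now rewrite pow_INR|ring].
- rewrite (Rlsum_ext _ _ (fun _ => 0)), Rlsum_const; [lra|intros; ring].
Qed.

Lemma sum_ln_small_primes_le Y M : 1 <= Y <= INR M ->
  Rsum 2 M (fun p => if prime_dec (Z.of_nat p) then below Y (INR p ^ 2) * ln (INR p) else 0)
  <= sqrt Y * ln 4.
Proof.
intros Y_range.
assert (sqrt_ge1 : 1 <= sqrt Y) by (rewrite <- sqrt_1; apply sqrt_le_1_alt; lra).
assert (sqrt_le : sqrt Y <= Y) by (rewrite <- (sqrt_sqrt Y) at 2 by lra; nra).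
destruct (Rcomplements.nfloor_ex (sqrt Y)) as [K [K_le K_gt]]; [lra|].
assert (K_ge1 : (1 <= K)%nat) by (destruct K; [simpl in K_gt; lra|lia]).
assert (K_le_M : (K <= M)%nat) by (apply INR_le; lra).
set (theta_term p := if primeb p then ln (INR p) else 0).
apply Rle_trans with (Rsum 2 M (fun p => if (p <=? K)%nat then theta_term p else 0)).
{ apply Rlsum_le; intros p _; unfold theta_term; rewrite if_primeb.
  destruct prime_dec as [p_prime|]; [|destruct (p <=? K)%nat; lra].
  pose proof (ln_INR_ge0 p ltac:(apply prime_ge2 in p_prime; lia)).
  unfold below; destruct Rle_dec as [p_small|]; [|destruct (p <=? K)%nat; lra].
  destruct (Nat.leb_spec p K) as [|p_big]; [lra|exfalso].
  assert (INR (S K) <= INR p) by (apply le_INR; lia).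
  rewrite S_INR in *; assert (sqrt Y * sqrt Y = Y) by (apply sqrt_sqrt; lra); nra. }
rewrite <- (Rsum_extend 2 K M); [|lia|lia|].
2:{ intros p p_range; destruct (Nat.leb_spec p K); [lia|reflexivity]. }
unfold Rsum at 1; rewrite (Rlsum_ext _ _ theta_term).
2:{ intros p p_in; apply in_seq in p_in; destruct (Nat.leb_spec p K); [reflexivity|lia]. }
apply Rle_trans with (Rsum 1 K theta_term).
{ assert (theta_1 : theta_term 1%nat = 0).
  { unfold theta_term, primeb; destruct (prime_dec (Z.of_nat 1)) as [one_prime|]; [|reflexivity].
    now apply not_prime_1 in one_prime. }
  rewrite (Rsum_cons 1 K), theta_1 by lia; unfold Rsum; lra. }
eapply Rle_trans; [apply sum_ln_primes_le|].
apply Rmult_le_compat_r; [rewrite <- ln_1; apply Rcomplements.ln_le; lra|lra].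
Qed.

Lemma sum_window_prime_power_logs_le_sum_primes x M : (1 <= M)%nat ->
  Rsum 1 M (fun j => window x (INR j) * Rsum 2 j (fun p => Rsum 2 j (prime_power_log j p)))
  <= Rsum 2 M (fun p => if prime_dec (Z.of_nat p)
       then (2 * below (5/2 * x) (INR p ^ 2) + (if (p =? 2)%nat then 1 else 0)) * ln (INR p)
       else 0).
Proof.
intros M_pos.
unfold Rsum at 1; rewrite (Rlsum_ext _ _ (fun j =>
  Rsum 2 M (fun p => Rsum 2 M (fun m => window x (INR j) * prime_power_log j p m)))).
2:{ intros j j_in; apply in_seq in j_in.
    rewrite (Rsum_prime_power_log_extend j M) by lia; unfold Rsum; rewrite <- Rlsum_scal.
    apply Rlsum_ext; intros p _; now rewrite <- Rlsum_scal. }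
unfold Rsum; rewrite Rlsum_exchange; apply Rlsum_le; intros p _; rewrite Rlsum_exchange.
apply Rle_trans with (Rsum 2 M (fun m =>
  if prime_dec (Z.of_nat p) then window x (INR p ^ m) * ln (INR p) else 0)).
{ apply Rlsum_le; intros m _; apply sum_window_prime_power_log_le. }
unfold Rsum; destruct prime_dec as [p_prime|]; [|rewrite Rlsum_const; lra].
pose proof (ln_INR_ge0 p ltac:(apply prime_ge2 in p_prime; lia)).
rewrite (Rlsum_ext _ _ (fun m => ln (INR p) * window x (INR p ^ m))) by (intros; ring).
rewrite Rlsum_scal, Rmult_comm; apply Rmult_le_compat_r; [lra|].
apply sum_window_prime_powers_le; apply prime_ge2 in p_prime; lia.
Qed.

Lemma sum_window_prime_power_logs_le x M : 1 <= 5/2 * x <= INR M ->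
  Rsum 1 M (fun j => window x (INR j) * Rsum 2 j (fun p => Rsum 2 j (prime_power_log j p)))
  <= 2 * sqrt (5/2 * x) * ln 4 + ln 2.
Proof.
intros Y_range.
eapply Rle_trans; [apply sum_window_prime_power_logs_le_sum_primes; apply INR_le; simpl; lra|].
unfold Rsum; rewrite (Rlsum_ext _ _ (fun p =>
  2 * (if prime_dec (Z.of_nat p) then below (5/2 * x) (INR p ^ 2) * ln (INR p) else 0)
  + (if (p =? 2)%nat then ln 2 else 0))).
2:{ intros p _; destruct (Nat.eqb_spec p 2) as [->|_], prime_dec as [|two_not_prime];
    [replace (INR 2) with 2 by (simpl; ring); ring|exfalso; exact (two_not_prime prime_2)|ring|ring]. }
rewrite Rlsum_plus, Rlsum_scal.
pose proof (sum_ln_small_primes_le (5/2 * x) M Y_range).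
assert (Rlsum (seq 2 (S M - 2)) (fun p => if (p =? 2)%nat then ln 2 else 0) <= ln 2).
{ apply Rlsum_indicator_le; [apply seq_NoDup|rewrite <- ln_1; apply Rcomplements.ln_le; lra]. }
unfold Rsum in *; lra.
Qed.

(** * Termwise comparison *)

Section TermBounds.

Variables (N n : nat) (theta lam : nat -> R) (chi : nat -> CC).

Definition local_root_power_sum (p m : nat) : CC :=
  if (N mod p =? 0)%nat
  then Cpow (Cscale ((- lam p / sqrt (INR p)) ^ n) (chi p)) m
  else Csum 0 n (fun i => Cpow (Cmul (Cexpi ((2 * INR i - INR n) * theta p)) (chi p)) m).

Definition lambda_term (j p m : nat) : CC :=
  if prime_dec (Z.of_nat p) then
    if (j =? p ^ m)%nat then Cscale (ln (INR p)) (local_root_power_sum p m) else C0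
  else C0.

Lemma LambdaSym_split j : (1 <= j)%nat ->
  LambdaSym N n theta lam chi j
  = Cadd (lambda_term j j 1) (Csum 2 j (fun p => Csum 2 j (lambda_term j p))).
Proof.
intros j_pos.
change (LambdaSym N n theta lam chi j) with (Csum 2 j (fun p => Csum 1 j (lambda_term j p))).
assert (only_p_eq_j : Csum 2 j (fun p => lambda_term j p 1) = lambda_term j j 1).
{ rewrite Csum_Clsum; apply (Clsum_single _ (fun p => lambda_term j p 1) j); [apply seq_NoDup| |].
  - intros p p_ne; unfold lambda_term; destruct prime_dec; [|reflexivity].
    rewrite Nat.pow_1_r; destruct (Nat.eqb_spec j p); [congruence|reflexivity].
  - destruct (le_lt_dec 2 j) as [j_ge2|j_lt2]; [left; apply in_seq; lia|right].
    unfold lambda_term; destruct prime_dec as [j_prime|]; [apply prime_ge2 in j_prime; lia|reflexivity]. }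
rewrite <- only_p_eq_j, !Csum_Clsum, <- Clsum_add; apply Clsum_ext; intros p _.
rewrite !Csum_Clsum; now replace (S j - 1)%nat with (S (S j - 2)) by lia.
Qed.

Hypothesis lam_unit : forall p, nprime p -> Nat.divide p N -> lam p = 1 \/ lam p = -1.
Hypothesis chi_le1 : forall a, Cnorm (chi a) <= 1.

Lemma ramified_root_norm_le p : prime (Z.of_nat p) -> (N mod p =? 0)%nat = true ->
  Cnorm (Cscale ((- lam p / sqrt (INR p)) ^ n) (chi p)) <= 1.
Proof.
intros p_prime p_dvd; pose proof (prime_ge2 _ p_prime).
assert (lam_abs : Rabs (lam p) = 1).
{ apply Nat.eqb_eq, Nat.Lcm0.mod_divide in p_dvd.
  destruct (lam_unit p p_prime p_dvd) as [-> | ->]; unfold Rabs; destruct Rcase_abs; lra. }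
assert (sqrt_ge1 : 1 <= sqrt (INR p)) by (rewrite <- sqrt_1; apply sqrt_le_1_alt, (le_INR 1); lia).
assert (root_abs_le : Rabs (- lam p / sqrt (INR p)) <= 1).
{ unfold Rdiv; rewrite Rabs_mult, Rabs_Ropp, lam_abs, Rabs_inv, Rabs_right by lra.
  rewrite Rmult_1_l, <- Rinv_1; apply Rinv_le_contravar; lra. }
rewrite Cnorm_scale, <- RPow_abs.
pose proof (chi_le1 p); pose proof (Cnorm_ge0 (chi p)).
pose proof (pow_le (Rabs (- lam p / sqrt (INR p))) n (Rabs_pos _)).
pose proof (pow_incr (Rabs (- lam p / sqrt (INR p))) 1 n (conj (Rabs_pos _) root_abs_le)).
rewrite pow1 in *; nra.
Qed.

Lemma local_root_power_sum_norm_le p m : prime (Z.of_nat p) ->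
  Cnorm (local_root_power_sum p m) <= INR n + 1.
Proof.
intros p_prime; pose proof (pos_INR n).
assert (pow_le1 : forall z, Cnorm z <= 1 -> Cnorm (Cpow z m) <= 1).
{ intros z z_le1; rewrite Cnorm_Cpow, <- (pow1 m); apply pow_incr; split; [apply Cnorm_ge0|exact z_le1]. }
unfold local_root_power_sum; destruct (N mod p =? 0)%nat eqn:p_dvd.
- pose proof (pow_le1 _ (ramified_root_norm_le p p_prime p_dvd)); lra.
- rewrite Csum_Clsum; eapply Rle_trans; [apply Cnorm_Clsum_le|].
  apply Rle_trans with (Rlsum (seq 0 (S n - 0)) (fun _ => 1)).
  + apply Rlsum_le; intros i _; apply pow_le1.
    rewrite Cnorm_mul, Cnorm_Cexpi, Rmult_1_l; apply chi_le1.
  + rewrite Rlsum_const, length_seq, Nat.sub_0_r, S_INR; lra.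
Qed.

Lemma local_root_power_sum_unramified p : (N mod p =? 0)%nat = false ->
  local_root_power_sum p 1 = Cmul (chebU n (cos (theta p)), 0) (chi p).
Proof.
intros p_ndvd; unfold local_root_power_sum; rewrite p_ndvd.
rewrite <- Csum_Cexpi_chebU, !Csum_Clsum, <- Clsum_mulr.
apply Clsum_ext; intros i _; apply Cpow_1.
Qed.

Lemma lambda_term_norm_le j p m : Cnorm (lambda_term j p m) <= (INR n + 1) * prime_power_log j p m.
Proof.
unfold lambda_term, prime_power_log; destruct prime_dec as [p_prime|]; [|rewrite Cnorm_C0; lra].
destruct (j =? p ^ m)%nat; [|rewrite Cnorm_C0; lra].
pose proof (ln_INR_ge0 p ltac:(apply prime_ge2 in p_prime; lia)).
rewrite Cnorm_scale, Rabs_right, Rmult_comm by lra.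
apply Rmult_le_compat_r; [lra|apply local_root_power_sum_norm_le, p_prime].
Qed.

Variables (phi : R -> R) (x : R).
Hypothesis phi_range : forall t, 0 <= phi t <= 2.
Hypothesis phi_support : forall t, phi t <> 0 -> 1/2 <= t <= 5/2.
Hypothesis x_pos : 0 < x.

Lemma phi_le_window t : phi (t / x) <= 2 * window x t.
Proof.
destruct (Req_dec (phi (t / x)) 0) as [-> | phi_ne0]; [pose proof (window_01 x t); lra|].
pose proof (phi_range (t / x)).
apply phi_support in phi_ne0.
assert (t_eq : t = t / x * x) by (field; lra).
unfold window, below; destruct (Rle_dec (x / 2) t), (Rle_dec t (5/2 * x)); nra.
Qed.

Definition prime_main_term (p : nat) : CC :=
  if prime_dec (Z.of_nat p) then
    if (N mod p =? 0)%nat then C0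
    else Cscale (chebU n (cos (theta p)) * ln (INR p) * phi (INR p / x)) (chi p)
  else C0.

Lemma prime_term_error_le j :
  Cnorm (Csub (Cscale (phi (INR j / x)) (lambda_term j j 1)) (prime_main_term j))
  <= 2 * (if (primeb j && (N mod j =? 0)%nat)%bool then ln (INR j) else 0).
Proof.
unfold lambda_term, prime_main_term, primeb; rewrite Nat.pow_1_r, Nat.eqb_refl.
destruct prime_dec as [j_prime|]; simpl andb.
- pose proof (ln_INR_ge0 j ltac:(apply prime_ge2 in j_prime; lia)).
  pose proof (phi_range (INR j / x)).
  destruct (N mod j =? 0)%nat eqn:j_dvd.
  + eapply Rle_trans; [apply Cnorm_sub|].
    rewrite Cnorm_C0, Rplus_0_r, !Cnorm_scale, !Rabs_right by lra.
    unfold local_root_power_sum; rewrite j_dvd, Cpow_1.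
    pose proof (ramified_root_norm_le j j_prime j_dvd).
    assert (0 <= ln (INR j) * Cnorm (Cscale ((- lam j / sqrt (INR j)) ^ n) (chi j)))
      by (apply Rmult_le_pos; [lra|apply Cnorm_ge0]).
    nra.
  + rewrite local_root_power_sum_unramified by exact j_dvd.
    replace (Csub _ _) with C0 by CC_ring; rewrite Cnorm_C0; lra.
- replace (Csub _ _) with C0 by CC_ring; rewrite Cnorm_C0; lra.
Qed.

Lemma prime_power_terms_le j :
  Cnorm (Cscale (phi (INR j / x)) (Csum 2 j (fun p => Csum 2 j (lambda_term j p))))
  <= 2 * (INR n + 1) * (window x (INR j) * Rsum 2 j (fun p => Rsum 2 j (prime_power_log j p))).
Proof.
assert (norm_le : Cnorm (Csum 2 j (fun p => Csum 2 j (lambda_term j p)))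
                  <= (INR n + 1) * Rsum 2 j (fun p => Rsum 2 j (prime_power_log j p))).
{ rewrite Csum_Clsum; eapply Rle_trans; [apply Cnorm_Clsum_le|].
  unfold Rsum; rewrite <- Rlsum_scal; apply Rlsum_le; intros p _.
  rewrite Csum_Clsum; eapply Rle_trans; [apply Cnorm_Clsum_le|].
  rewrite <- Rlsum_scal; apply Rlsum_le; intros m _; apply lambda_term_norm_le. }
assert (0 <= Rsum 2 j (fun p => Rsum 2 j (prime_power_log j p))).
{ apply Rlsum_nonneg; intros; apply Rlsum_nonneg; intros; apply prime_power_log_ge0. }
pose proof (phi_range (INR j / x)); pose proof (phi_le_window (INR j)); pose proof (pos_INR n).
rewrite Cnorm_scale, Rabs_right by lra.
apply Rle_trans with (phi (INR j / x) * ((INR n + 1) * Rsum 2 j (fun p => Rsum 2 j (prime_power_log j p)))).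
- apply Rmult_le_compat_l; lra.
- assert (0 <= (INR n + 1) * Rsum 2 j (fun p => Rsum 2 j (prime_power_log j p))) by (apply Rmult_le_pos; lra).
  nra.
Qed.

Lemma term_error_le j : (1 <= j)%nat ->
  Cnorm (Csub (Cscale (phi (INR j / x)) (LambdaSym N n theta lam chi j)) (prime_main_term j))
  <= 2 * (if (primeb j && (N mod j =? 0)%nat)%bool then ln (INR j) else 0)
     + 2 * (INR n + 1) * (window x (INR j) * Rsum 2 j (fun p => Rsum 2 j (prime_power_log j p))).
Proof.
intros j_pos; rewrite LambdaSym_split by exact j_pos.
replace (Csub _ _) with (Cadd (Csub (Cscale (phi (INR j / x)) (lambda_term j j 1)) (prime_main_term j))
  (Cscale (phi (INR j / x)) (Csum 2 j (fun p => Csum 2 j (lambda_term j p))))) by CC_ring.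
eapply Rle_trans; [apply Cnorm_add|].
apply Rplus_le_compat; [apply prime_term_error_le|apply prime_power_terms_le].
Qed.

End TermBounds.

(** * The constant *)

Lemma exp_mult_INR k t : exp (INR k * t) = exp t ^ k.
Proof.
induction k as [|k IH]; simpl pow.
- rewrite Rmult_0_l; exact exp_0.
- rewrite S_INR, Rmult_plus_distr_r, Rmult_1_l, exp_plus, IH; ring.
Qed.

(* exp (71/100) = exp (71/6400)^64 >= (1 + 71/6400)^64 = 6471^64 / 6400^64 >= 2 *)
Lemma ln2_le : ln 2 <= 71/100.
Proof.
assert (pow_bound : 2 * 6400 ^ 64 <= 6471 ^ 64).
{ rewrite !pow_IZR, <- mult_IZR; apply IZR_le; vm_compute; discriminate. }
assert (exp_bound : (6471/6400) ^ 64 <= exp (71/100)).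
{ replace (71/100) with (INR 64 * (71/6400)) by (simpl; field).
  rewrite exp_mult_INR; apply pow_incr.
  pose proof (exp_ineq1_le (71/6400)); lra. }
rewrite <- (ln_exp (71/100)); apply Rcomplements.ln_le; [lra|].
apply Rle_trans with ((6471/6400) ^ 64); [|exact exp_bound].
unfold Rdiv; rewrite Rpow_mult_distr, pow_inv.
apply Rmult_le_reg_r with (6400 ^ 64); [apply pow_lt; lra|].
rewrite Rmult_assoc, Rinv_l by (apply pow_nonzero; lra); lra.
Qed.

Lemma prime_power_bound_le x : x > 1000000 ->
  2 * (2 * sqrt (5/2 * x) * ln 4 + ln 2) <= 906/100 * sqrt x.
Proof.
intros x_big; rewrite sqrt_mult by lra.
assert (sqrt_5_2 : sqrt (5/2) <= 15812/10000).
{ rewrite <- (sqrt_square (15812/10000)) by lra; apply sqrt_le_1_alt; lra. }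
assert (sqrt_x : 1000 <= sqrt x).
{ rewrite <- (sqrt_square 1000) by lra; apply sqrt_le_1_alt; lra. }
assert (ln4 : ln 4 = 2 * ln 2) by (replace 4 with (2 * 2) by ring; rewrite ln_mult by lra; ring).
assert (ln2_ge0 : 0 <= ln 2) by (rewrite <- ln_1; apply Rcomplements.ln_le; lra).
pose proof ln2_le; pose proof (sqrt_pos (5/2)).
assert (sqrt (5/2) * ln 2 <= 15812/10000 * (71/100)) by (apply Rmult_le_compat; lra).
rewrite ln4; nra.
Qed.

Theorem mainTheorem8
  (N : nat) (theta lam : nat -> R) (n q : nat) (chi : nat -> CC)
  (phi : R -> R) (x : R) (M : nat) :
  (1 <= N)%nat -> squarefree N ->
  (forall p, nprime p -> ~ Nat.divide p N -> 0 <= theta p <= PI) ->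
  (forall p, nprime p -> Nat.divide p N -> lam p = 1 \/ lam p = -1) ->
  primitive_char q chi -> Nat.gcd q N = 1%nat ->
  test_fun phi -> x > 1000000 -> 5/2 * x <= INR M ->
  Cnorm (Csub
    (Csum 1 M (fun j => Cscale (phi (INR j / x)) (LambdaSym N n theta lam chi j)))
    (Csum 1 M (fun p =>
       if prime_dec (Z.of_nat p) then
         if Nat.eqb (Nat.modulo N p) 0%nat then C0
         else Cscale (chebU n (cos (theta p)) * ln (INR p) * phi (INR p / x)) (chi p)
       else C0)))
  <= 906/100 * (INR n + 1) * sqrt x + 2 * (INR n + 1) * ln (INR N).
Proof.
intros N_pos _ _ lam_unit [chi_char _] _ [_ [phi_range phi_support]] x_big M_big.
change (Csum 1 M (fun p => if prime_dec (Z.of_nat p) then _ else _)) with (Csum 1 M (prime_main_term N n theta chi phi x)).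
rewrite !Csum_Clsum, <- Clsum_sub.
eapply Rle_trans; [apply Cnorm_Clsum_le|].
eapply Rle_trans.
{ apply Rlsum_le; intros j j_in; apply in_seq in j_in.
  apply (term_error_le N n theta lam chi lam_unit (dirichlet_char_norm_le q chi chi_char)
           phi x phi_range phi_support ltac:(lra)); lia. }
rewrite Rlsum_plus, !Rlsum_scal.
pose proof (sum_ln_prime_divisors_le N M N_pos) as divisors_le.
pose proof (sum_window_prime_power_logs_le x M ltac:(lra)) as prime_powers_le.
pose proof (prime_power_bound_le x x_big).
pose proof (pos_INR n); pose proof (ln_INR_ge0 N N_pos).
change (Rlsum (seq 1 (S M - 1)) ?f) with (Rsum 1 M f).
set (D := Rsum 1 M _) in divisors_le |- *.
set (P := Rsum 1 M _) in prime_powers_le |- *.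
assert (2 * (INR n + 1) * P <= (INR n + 1) * (906/100 * sqrt x)) by nra.
nra.
Qed.
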